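(* For all $n\ge2$, the number of permutations in $\mathcal{S}_n$ avoiding each of $1243$, $2143$ and $231$ equals $(n+2)2^{n-3}$.
   Context: A permutation $\pi\in\mathcal{S}_n$ avoids $\tau\in\mathcal{S}_k$ if there are no indices $i_1<\dots<i_k$ with $\pi_{i_1}\cdots\pi_{i_k}$ in the same relative order as $\tau_1\cdots\tau_k$. *)

From mathcomp Require Import all_boot all_order all_algebra all_fingroup.
Set Implicit Arguments. Unset Strict Implicit. Unset Printing Implicit Defensive.

(* A pattern tau in S_k is given in one-line notation as a list of naturals
   tau_1 ... tau_k (a permutation of 1..k).
   pi : 'S_n contains tau if there are indices i_1 < ... < i_k such that
   pi(i_1) ... pi(i_k) is in the same relative order as tau_1 ... tau_k. *)
Definition occurrence n (pi : 'S_n) (tau : seq nat) (f : 'I_(size tau) -> 'I_n) : bool :=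
  [forall a : 'I_(size tau), forall b : 'I_(size tau),
     ((a < b)%N ==> (f a < f b)%N) &&
     ((pi (f a) < pi (f b))%N == (nth 0%N tau a < nth 0%N tau b)%N)].

Definition contains n (pi : 'S_n) (tau : seq nat) : bool :=
  [exists f : {ffun 'I_(size tau) -> 'I_n}, @occurrence n pi tau f].

Definition avoids n (pi : 'S_n) (tau : seq nat) : bool := ~~ contains pi tau.

From mathcomp Require Import all_boot all_order all_algebra all_fingroup.
From mathcomp Require Import zify ring.
Set Implicit Arguments. Unset Strict Implicit. Unset Printing Implicit Defensive.

(* Classify a permutation by the position of its largest letter M.  Putting M
   in front of or behind an avoider of {1243, 2143, 231} gives an avoider, since
   none of these patterns begins or ends with its largest letter.  Putting M
   anywhere from the third to the penultimate position creates one of the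
   patterns.  Putting it second, right after x, gives an avoider exactly when x
   is the smallest letter and the rest avoids {132, 231}; the same
   classification counts those avoiders as 2^(n-1).  So the count a_n satisfies
   a_n = 2 a_(n-1) + 2^(n-3), whence a_n = (n+2) 2^(n-3). *)

Definition insert_at (T : Type) (i : nat) (x : T) (s : seq T) : seq T :=
  take i s ++ x :: drop i s.

Lemma insert_at0 (T : Type) (x : T) s : insert_at 0 x s = x :: s.
Proof. by rewrite /insert_at take0 drop0. Qed.

Lemma insert_at_cons (T : Type) i (y x : T) s :
  insert_at i.+1 y (x :: s) = x :: insert_at i y s.
Proof. by []. Qed.

Lemma insert_at_size (T : Type) (x : T) s : insert_at (size s) x s = rcons s x.
Proof. by rewrite /insert_at take_size drop_size cats1. Qed.

Lemma count_sum_fibers (T : Type) (f : T -> nat) k (a : pred T) l :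
  all (fun t => f t < k) l ->
  count a l = \sum_(0 <= i < k) count (fun t => (f t == i) && a t) l.
Proof.
elim: l => [_|t l IH /= /andP [ftk /IH ->]]; first by rewrite big1.
rewrite big_split /=; congr (_ + _); symmetry.
transitivity (\sum_(0 <= i < k | i == f t) a t); last by rewrite big_nat1_eq ftk.
by rewrite [RHS]big_mkcond; apply: eq_bigr => i _; rewrite eq_sym; case: eqP.
Qed.

Section InsertAt.

Variables (T : eqType) (x : T).

Lemma mem_insert_at i s : x \in insert_at i x s.
Proof. by rewrite mem_cat mem_head orbT. Qed.

Lemma subseq_insert_at (x0 : T) i s :
  i < size s -> subseq [:: x; nth x0 s i] (insert_at i x s).
Proof.
move=> i_s; rewrite /insert_at (drop_nth x0 i_s).
by apply: subseq_trans (suffix_subseq _ _); rewrite /= !eqxx sub0seq.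
Qed.

Lemma index_insert_at i s : x \notin s -> i <= size s -> index x (insert_at i x s) = i.
Proof.
move=> xs le_is; rewrite /insert_at index_cat ifN ?size_takel //= ?eqxx ?addn0 //.
by apply: contra xs; apply: mem_take.
Qed.

Lemma rem_insert_at i s : x \notin s -> i <= size s -> rem x (insert_at i x s) = s.
Proof.
move=> xs le_is; rewrite remE index_insert_at // /insert_at.
rewrite take_size_cat ?size_takel // drop_cat size_takel // ltnNge leqnSn /=.
by rewrite subSnn /= drop0 cat_take_drop.
Qed.

Lemma insert_at_index_rem t : x \in t -> insert_at (index x t) x (rem x t) = t.
Proof.
move=> xt; have it := index_size x t; rewrite remE /insert_at.
rewrite take_size_cat ?drop_size_cat ?size_takel //.
have dE : drop (index x t) t = x :: drop (index x t).+1 t.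
  by rewrite (drop_nth x) ?index_mem ?nth_index.
by rewrite -dE cat_take_drop.
Qed.

Lemma perm_insert_at i s : perm_eq (insert_at i x s) (x :: s).
Proof. by rewrite /insert_at -cat1s perm_catCA /= cat_take_drop. Qed.

Lemma perm_filter_index_permutations i s : x \notin s -> i <= size s ->
  perm_eq [seq t <- permutations (x :: s) | index x t == i]
          [seq insert_at i x t | t <- permutations s].
Proof.
move=> xs le_is; apply: uniq_perm.
- by rewrite filter_uniq ?permutations_uniq.
- rewrite map_inj_in_uniq ?permutations_uniq // => t u.
  rewrite !mem_permutations => st su /(congr1 (rem x)).
  by rewrite !rem_insert_at ?(perm_mem st) ?(perm_mem su) ?(perm_size st)
                            ?(perm_size su).
move=> t; rewrite mem_filter mem_permutations; apply/andP/mapP => [[/eqP <- tx]|].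
  have xt : x \in t by rewrite (perm_mem tx) mem_head.
  exists (rem x t); last by rewrite insert_at_index_rem.
  by rewrite mem_permutations -(perm_cons x) -(permPr tx) perm_sym perm_to_rem.
move=> [u]; rewrite mem_permutations => us ->.
rewrite index_insert_at ?(perm_mem us) ?(perm_size us) //.
by rewrite (permPl (perm_insert_at _ _)) perm_cons.
Qed.

Lemma count_permutations_cons s (a : pred (seq T)) : x \notin s ->
  count a (permutations (x :: s)) =
    \sum_(0 <= i < (size s).+1) count (a \o insert_at i x) (permutations s).
Proof.
move=> xs; rewrite (count_sum_fibers (f := index x) (k := (size s).+1)).
  rewrite big_nat [RHS]big_nat; apply: eq_bigr => i /andP [_ le_is].
  rewrite -count_map -(seq.permP (perm_filter_index_permutations xs le_is)).
  by rewrite count_filter; apply: eq_count => t; rewrite /= andbC.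
apply/allP => t; rewrite mem_permutations => tx.
rewrite -[(size s).+1]/(size (x :: s)) -(perm_size tx).
by rewrite index_mem (perm_mem tx) mem_head.
Qed.

End InsertAt.

Lemma count_permutations_iota a n (R : pred (seq nat)) :
  count R (permutations (iota a n.+1)) =
    \sum_(0 <= i < n.+1) count (R \o insert_at i (a + n)) (permutations (iota a n)).
Proof.
have iotaE : perm_eq (iota a n.+1) ((a + n) :: iota a n).
  by rewrite -addn1 iotaD /= cats1 perm_rcons.
rewrite (seq.permP (perm_permutations iotaE)) count_permutations_cons ?size_iota //.
by rewrite mem_iota ltnn andbF.
Qed.

Definition order_iso (t p : seq nat) : bool :=
  (size t == size p) &&
  all (fun i => all (fun j => (nth 0 t i < nth 0 t j) == (nth 0 p i < nth 0 p j))
                    (iota 0 (size p))) (iota 0 (size p)).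

Definition word_contains (w p : seq nat) : bool :=
  [exists m : (size w).-tuple bool, order_iso (mask m w) p].

Definition avoids_all (B : seq (seq nat)) (w : seq nat) : bool :=
  all (fun p => ~~ word_contains w p) B.

Lemma order_isoP t p :
  reflect (size t = size p /\ forall i j, i < size p -> j < size p ->
             (nth 0 t i < nth 0 t j) = (nth 0 p i < nth 0 p j))
          (order_iso t p).
Proof.
apply: (iffP andP) => [[/eqP st /allP H] | [st H]]; split=> //.
- move=> i j ip jp; have := H i; rewrite mem_iota ip => /(_ isT) /allP /(_ j).
  by rewrite mem_iota jp => /(_ isT) /eqP.
- by rewrite st.
- apply/allP => i; rewrite mem_iota => /andP [_ ip]; apply/allP => j.
  by rewrite mem_iota => /andP [_ jp]; rewrite H.
Qed.

Lemma order_iso_sym t p : order_iso t p -> order_iso p t.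
Proof.
move=> /order_isoP [st H]; apply/order_isoP; split=> // i j it jt.
by rewrite H -?st.
Qed.

Lemma order_iso_trans t p q : order_iso t p -> order_iso p q -> order_iso t q.
Proof.
move=> /order_isoP [st Htp] /order_isoP [sp Hpq]; apply/order_isoP.
split=> [|i j iq jq]; first by rewrite st.
by rewrite Htp ?sp ?Hpq.
Qed.

Lemma order_iso_behead x t a p : order_iso (x :: t) (a :: p) -> order_iso t p.
Proof.
move=> /order_isoP [[st] H]; apply/order_isoP; split=> // i j ip jp.
exact: (H i.+1 j.+1).
Qed.

Lemma order_iso_cons_min x t a p : order_iso t p ->
  {in t, forall y, x < y} -> {in p, forall q, a < q} -> order_iso (x :: t) (a :: p).
Proof.
move=> /order_isoP [st H] xt ap; apply/order_isoP.
have tn j : j < size p -> x < nth 0 t j by move=> jp; rewrite xt // mem_nth ?st.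
have pn j : j < size p -> a < nth 0 p j by move=> jp; rewrite ap // mem_nth.
split=> [|[|i] [|j]] /=; first by rewrite st.
- by move=> _ _; rewrite !ltnn.
- by move=> _ jp; rewrite tn ?pn.
- by move=> ip _; rewrite !ltnNge (ltnW (tn _ ip)) (ltnW (pn _ ip)).
- exact: H.
Qed.

Lemma order_iso_rev t p : order_iso t p -> order_iso (rev t) (rev p).
Proof.
move=> /order_isoP [st H]; apply/order_isoP; rewrite !size_rev.
have lt_rev k : k < size p -> size p - k.+1 < size p by lia.
by split=> // i j ip jp; rewrite !nth_rev ?st // H ?lt_rev.
Qed.

Lemma word_containsP w p :
  reflect (exists2 t, subseq t w & order_iso t p) (word_contains w p).
Proof.
apply: (iffP existsP) => [[m tp] | [t /subseqP [m sm ->] tp]].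
  by exists (mask m w); first exact: mask_subseq.
have mt : size m == size w by apply/eqP.
by exists (Tuple mt).
Qed.

Lemma word_contains_subseq w1 w2 p :
  subseq w1 w2 -> word_contains w1 p -> word_contains w2 p.
Proof.
move=> w12 /word_containsP [t tw tp]; apply/word_containsP.
by exists t; first exact: subseq_trans tw w12.
Qed.

Lemma word_contains_iso w p q :
  order_iso p q -> word_contains w p = word_contains w q.
Proof.
move=> pq; apply/word_containsP/word_containsP => -[t tw tp]; exists t => //.
  exact: order_iso_trans pq.
exact: order_iso_trans (order_iso_sym pq).
Qed.

Lemma word_contains_rev w p : word_contains (rev w) (rev p) = word_contains w p.
Proof.
apply/word_containsP/word_containsP => -[t tw tp].
  exists (rev t); first by rewrite -subseq_rev revK.
  by rewrite -[p]revK; apply: order_iso_rev.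
by exists (rev t); rewrite ?subseq_rev ?order_iso_rev.
Qed.

Lemma word_contains_size w p : word_contains w p -> size p <= size w.
Proof.
by case/word_containsP => t /size_subseq tw /order_isoP [<- _].
Qed.

Lemma word_contains_behead x s a p :
  word_contains (x :: s) (a :: p) -> word_contains s p.
Proof.
case/word_containsP => -[|y t] // yt /order_iso_behead tp; apply/word_containsP.
by exists t => //; move: yt => /=; case: eqP => // _ /cons_subseq.
Qed.

Lemma word_contains_pattern_behead w a p :
  word_contains w (a :: p) -> word_contains w p.
Proof.
case/word_containsP => -[|y t] // yt /order_iso_behead tp; apply/word_containsP.
by exists t => //; apply: subseq_trans yt; apply: subseq_cons.
Qed.

Lemma word_contains_consP x s p : word_contains (x :: s) p ->
  word_contains s p \/ exists2 t, subseq t s & order_iso (x :: t) p.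
Proof.
case/word_containsP => -[|y t] ts tp.
  by left; apply/word_containsP; exists [::]; rewrite ?sub0seq.
move: ts => /=; case: eqP => [<- | _] ts; first by right; exists t.
by left; apply/word_containsP; exists (y :: t).
Qed.

Lemma word_contains_cons_max M s p : {in s, forall y, y < M} ->
  has (ltn (head 0 p)) p -> word_contains (M :: s) p = word_contains s p.
Proof.
move=> sM /hasP [q qp hq]; apply/idP/idP; last exact/word_contains_subseq/subseq_cons.
case/word_contains_consP => // -[t ts /order_isoP [st H]]; exfalso.
case: p => [|a p] // in qp hq st H *; case: st => st.
have /(nthP 0) [j jp qE] : q \in p.
  by move: qp hq; rewrite inE => /predU1P [-> /=|//]; rewrite ltnn.
have := H 0 j.+1 isT jp; rewrite /= qE [a < q]hq ltnNge => /negP; apply.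
by rewrite ltnW // sM // (mem_subseq ts) // mem_nth ?st.
Qed.

Lemma word_contains_cons_min m s p : {in s, forall y, m < y} ->
  has (fun q => q < head 0 p) p -> word_contains (m :: s) p = word_contains s p.
Proof.
move=> ms /hasP [q qp hq]; apply/idP/idP; last exact/word_contains_subseq/subseq_cons.
case/word_contains_consP => // -[t ts /order_isoP [st H]]; exfalso.
case: p => [|a p] // in qp hq st H *; case: st => st.
have /(nthP 0) [j jp qE] : q \in p.
  by move: qp hq; rewrite inE => /predU1P [-> /=|//]; rewrite ltnn.
have := H j.+1 0 jp isT; rewrite /= qE [q < a]hq ltnNge => /negP; apply.
by rewrite ltnW // ms // (mem_subseq ts) // mem_nth ?st.
Qed.

Lemma word_contains_rcons_max M s p : {in s, forall y, y < M} ->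
  has (ltn (last 0 p)) p -> word_contains (rcons s M) p = word_contains s p.
Proof.
move=> sM hp; rewrite -word_contains_rev rev_rcons word_contains_cons_max.
- exact: word_contains_rev.
- by move=> y; rewrite mem_rev; apply: sM.
- by case/lastP: p hp => // p z; rewrite has_rev rev_rcons last_rcons.
Qed.

Lemma word_contains_prepend_min x s a p :
  {in s, forall y, x < y} -> all (ltn a) p ->
  word_contains (x :: s) (a :: p) = word_contains s p.
Proof.
move=> xs /allP ap; apply/idP/idP; first exact: word_contains_behead.
case/word_containsP => t ts tp; apply/word_containsP; exists (x :: t).
  by rewrite /= eqxx.
by apply: order_iso_cons_min => // y /(mem_subseq ts); apply: xs.
Qed.

Lemma avoids_all_short B w : all (fun p => size w < size p) B -> avoids_all B w.
Proof.
move=> /allP hB; apply/allP => p /hB; apply: contraL => /word_contains_size.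
by rewrite -leqNgt.
Qed.

Lemma avoids_all_cons_max B M s : {in s, forall y, y < M} ->
  all (fun p => has (ltn (head 0 p)) p) B -> avoids_all B (M :: s) = avoids_all B s.
Proof.
by move=> sM /allP hB; apply: eq_in_all => p /hB /(word_contains_cons_max sM) ->.
Qed.

Lemma avoids_all_rcons_max B M s : {in s, forall y, y < M} ->
  all (fun p => has (ltn (last 0 p)) p) B -> avoids_all B (rcons s M) = avoids_all B s.
Proof.
by move=> sM /allP hB; apply: eq_in_all => p /hB /(word_contains_rcons_max sM) ->.
Qed.

Ltac solve_order_iso :=
  apply/order_isoP; split=> // -[|[|[|[|i]]]] [|[|[|[|j]]]] //= _ _; lia.

Lemma word_contains_132 x z y w :
  subseq [:: x; z; y] w -> x < y < z -> word_contains w [:: 1; 3; 2].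
Proof.
move=> xzy /andP [xy yz]; apply/word_containsP; exists [:: x; z; y] => //.
solve_order_iso.
Qed.

Lemma word_contains_231 x z y w :
  subseq [:: x; z; y] w -> y < x < z -> word_contains w [:: 2; 3; 1].
Proof.
move=> xzy /andP [yx xz]; apply/word_containsP; exists [:: x; z; y] => //.
solve_order_iso.
Qed.

Lemma word_contains_1243 a b c d w :
  subseq [:: a; b; c; d] w -> a < b < d -> d < c -> word_contains w [:: 1; 2; 4; 3].
Proof.
move=> sw /andP [ab bd] dc; apply/word_containsP; exists [:: a; b; c; d] => //.
solve_order_iso.
Qed.

Lemma word_contains_2143 a b c d w :
  subseq [:: a; b; c; d] w -> b < a < d -> d < c -> word_contains w [:: 2; 1; 4; 3].
Proof.
move=> sw /andP [ba ad] dc; apply/word_containsP; exists [:: a; b; c; d] => //.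
solve_order_iso.
Qed.

Definition patterns_132_231 : seq (seq nat) := [:: [:: 1; 3; 2]; [:: 2; 3; 1]].

Definition patterns_1243_2143_231 : seq (seq nat) :=
  [:: [:: 1; 2; 4; 3]; [:: 2; 1; 4; 3]; [:: 2; 3; 1]].

Lemma not_avoids_132_231_max_inner x M t i :
  uniq (x :: t) -> {in x :: t, forall y, y < M} -> i < size t ->
  ~~ avoids_all patterns_132_231 (x :: insert_at i M t).
Proof.
move=> /andP [xt _] tM it; set y := nth 0 t i.
have yt : y \in t by rewrite mem_nth.
have sub : subseq [:: x; M; y] (x :: insert_at i M t).
  by rewrite /= eqxx subseq_insert_at.
rewrite /avoids_all /= andbT negb_and !negbK.
have /tM xM := mem_head x t; have /tM yM : y \in x :: t by rewrite inE yt orbT.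
case: (ltngtP x y) => [xy | yx | xy]; last by rewrite xy yt in xt.
- by rewrite (word_contains_132 sub) ?xy.
- by rewrite (word_contains_231 sub) ?yx ?orbT.
Qed.

Lemma not_avoids_1243_2143_231_max_inner a1 a2 M t i :
  uniq [:: a1, a2 & t] -> {in [:: a1, a2 & t], forall y, y < M} -> i < size t ->
  ~~ avoids_all patterns_1243_2143_231 [:: a1, a2 & insert_at i M t].
Proof.
move=> /and3P [+ a2t _] tM it; rewrite inE negb_or => /andP [a12 a1t].
set y := nth 0 t i; have yt : y \in t by rewrite mem_nth.
have sub4 : subseq [:: a1; a2; M; y] [:: a1, a2 & insert_at i M t].
  by rewrite /= !eqxx subseq_insert_at.
have sub1 : subseq [:: a1; M; y] [:: a1, a2 & insert_at i M t].
  by apply: subseq_trans sub4; apply/subseqP; exists [:: true; false; true; true].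
have sub2 : subseq [:: a2; M; y] [:: a1, a2 & insert_at i M t].
  by apply: subseq_trans sub4; apply/subseqP; exists [:: false; true; true; true].
have [a1M a2M yM] : [/\ a1 < M, a2 < M & y < M].
  by split; apply: tM; rewrite !inE ?yt ?eqxx ?orbT.
rewrite /avoids_all /= andbT !negb_and !negbK.
case: (ltngtP y a1) => [ya1 | a1y | ya1]; last by rewrite -ya1 yt in a1t.
  by rewrite (word_contains_231 sub1) ?ya1 ?orbT.
case: (ltngtP y a2) => [ya2 | a2y | ya2]; last by rewrite -ya2 yt in a2t.
  by rewrite (word_contains_231 sub2) ?ya2 ?orbT.
case: (ltngtP a1 a2) => [lt12 | a21 | eq12]; last by rewrite eq12 eqxx in a12.
  by rewrite (word_contains_1243 sub4) ?lt12 ?a2y.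
by rewrite (word_contains_2143 sub4) ?a21 ?a1y ?orbT.
Qed.

Lemma avoids_1243_2143_231_max_second x M b :
  x < M -> {in b, forall y, x < y < M} ->
  avoids_all patterns_1243_2143_231 [:: x, M & b] = avoids_all patterns_132_231 b.
Proof.
move=> xM xbM; have bM : {in b, forall y, y < M} by move=> y /xbM /andP [].
have xMb : {in M :: b, forall y, x < y}.
  by move=> y; rewrite inE => /predU1P [-> // | /xbM /andP []].
rewrite /avoids_all /= !andbT.
rewrite word_contains_prepend_min // word_contains_cons_max //.
rewrite !(word_contains_cons_min (m := x)) // !word_contains_cons_max //.
rewrite (@word_contains_iso _ [:: 2; 4; 3] [:: 1; 3; 2]) //.
have c2143_132 : word_contains b [:: 2; 1; 4; 3] -> word_contains b [:: 1; 3; 2].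
  move/word_contains_pattern_behead.
  by rewrite (@word_contains_iso _ [:: 1; 4; 3] [:: 1; 3; 2]).
by case: (boolP (word_contains b [:: 1; 3; 2])) => //= /(contraNF c2143_132) ->.
Qed.

Lemma not_avoids_1243_2143_231_max_second x M y b : y \in b -> y < x < M ->
  ~~ avoids_all patterns_1243_2143_231 [:: x, M & b].
Proof.
move=> yb yxM; rewrite /avoids_all /= !negb_and (word_contains_231 _ yxM) ?orbT //.
by rewrite /= !eqxx sub1seq.
Qed.

Lemma mem_permutations_iota a n t : t \in permutations (iota a n) ->
  [/\ size t = n, uniq t & {in t, forall y, a <= y < a + n}].
Proof.
rewrite mem_permutations => ta; split; first by rewrite (perm_size ta) size_iota.
  by rewrite (perm_uniq ta) iota_uniq.
by move=> y; rewrite (perm_mem ta) mem_iota.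
Qed.

Lemma count_avoids_all_short B s : uniq s -> all (fun p => size s < size p) B ->
  count (avoids_all B) (permutations s) = (size s)`!.
Proof.
move=> us hB; rewrite -(size_permutations us) -count_predT.
apply: eq_in_count => t; rewrite mem_permutations => /perm_size ts.
by apply: avoids_all_short; rewrite ts.
Qed.

Lemma count_avoids_all_insert_first B a n :
  all (fun p => has (ltn (head 0 p)) p) B ->
  count (avoids_all B \o insert_at 0 (a + n)) (permutations (iota a n)) =
  count (avoids_all B) (permutations (iota a n)).
Proof.
move=> hB; apply: eq_in_count => t /mem_permutations_iota [_ _ tM].
by rewrite /comp insert_at0 avoids_all_cons_max // => y /tM /andP [].
Qed.

Lemma count_avoids_all_insert_last B a n :
  all (fun p => has (ltn (last 0 p)) p) B ->
  count (avoids_all B \o insert_at n (a + n)) (permutations (iota a n)) =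
  count (avoids_all B) (permutations (iota a n)).
Proof.
move=> hB; apply: eq_in_count => t /mem_permutations_iota [st _ tM].
by rewrite /comp -{1}st insert_at_size avoids_all_rcons_max // => y /tM /andP [].
Qed.

Lemma count_avoids_132_231 a n :
  count (avoids_all patterns_132_231) (permutations (iota a n.+1)) = 2 ^ n.
Proof.
elim: n => [|n IH]; first by rewrite count_avoids_all_short ?iota_uniq.
rewrite count_permutations_iota big_nat_recr // big_nat_recl //.
rewrite count_avoids_all_insert_first ?count_avoids_all_insert_last // IH.
rewrite big_nat big1 => [|i /andP [_ i_n]].
  by rewrite /= addn0 expnS mul2n addnn.
rewrite (eq_in_count (a2 := pred0)) ?count_pred0 // => t tP.
have [st ut tM] := mem_permutations_iota tP; apply/negbTE.
case: t st ut tM {tP} => // x t [st] ut tM; rewrite /comp insert_at_cons.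
by apply: not_avoids_132_231_max_inner; rewrite ?st // => y /tM; lia.
Qed.

Lemma count_avoids_1243_2143_231_max_second a n :
  count (avoids_all patterns_1243_2143_231 \o insert_at 1 (a + n.+2))
        (permutations (iota a n.+2)) = 2 ^ n.
Proof.
rewrite -[iota a n.+2]/(a :: iota a.+1 n.+1) count_permutations_cons; last first.
  by rewrite mem_iota ltnn.
rewrite size_iota big_nat_recl // big_nat big1 => [|j /andP [_ j_n]].
  rewrite addn0 -(count_avoids_132_231 a.+1); apply: eq_in_count => u.
  case/mem_permutations_iota => _ _ uM.
  rewrite /comp insert_at0 insert_at_cons insert_at0.
  by rewrite avoids_1243_2143_231_max_second // => [|y /uM]; lia.
rewrite (eq_in_count (a2 := pred0)) ?count_pred0 // => u uP.
have [su _ uM] := mem_permutations_iota uP; case: u su uM {uP} => // u0 u _ uM.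
rewrite /comp !insert_at_cons insert_at0; apply/negbTE.
apply: (not_avoids_1243_2143_231_max_second (mem_insert_at _ _ _)).
by have := uM u0 (mem_head _ _); lia.
Qed.

(* Doubled to avoid the exponent n - 1 at n = 0. *)
Lemma count_avoids_1243_2143_231 a n :
  2 * count (avoids_all patterns_1243_2143_231) (permutations (iota a n.+2)) =
  (n + 4) * 2 ^ n.
Proof.
elim: n => [|n IH]; first by rewrite count_avoids_all_short ?iota_uniq.
rewrite count_permutations_iota big_nat_recr // big_nat_recl // big_nat_recl //.
rewrite count_avoids_all_insert_first ?count_avoids_all_insert_last //.
rewrite count_avoids_1243_2143_231_max_second.
rewrite big_nat big1 => [|i /andP [_ i_n]]; first by move: IH; rewrite /= expnS; nia.
rewrite (eq_in_count (a2 := pred0)) ?count_pred0 // => t tP.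
have [st ut tM] := mem_permutations_iota tP; apply/negbTE.
case: t st ut tM {tP} => [|a1 [|a2 t]] // [st] ut tM; rewrite /comp !insert_at_cons.
by apply: not_avoids_1243_2143_231_max_inner; rewrite ?st // => y /tM; lia.
Qed.

Definition word n (pi : 'S_n) : seq nat := [seq val (pi i) | i <- enum 'I_n].

Lemma size_word n (pi : 'S_n) : size (word pi) = n.
Proof. by rewrite size_map size_enum_ord. Qed.

Lemma nth_map_enum_ord k (g : 'I_k -> nat) i (ik : i < k) :
  nth 0 [seq g a | a <- enum 'I_k] i = g (Ordinal ik).
Proof.
by rewrite (nth_map (Ordinal ik)) ?size_enum_ord // -[i]/(val (Ordinal ik)) nth_ord_enum.
Qed.

Lemma nth_word n (pi : 'S_n) (i : 'I_n) : nth 0 (word pi) i = pi i.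
Proof. by rewrite nth_map_enum_ord; congr (val (pi _)); apply: val_inj. Qed.

Lemma word_tupleE n (pi : 'S_n) :
  word pi = [tuple tnth [tuple val i | i < n] (pi i) | i < n].
Proof. by apply: eq_map => i; rewrite tnth_mktuple. Qed.

Lemma perm_eq_iota_wordP n s :
  reflect (exists pi : 'S_n, s = word pi) (perm_eq s (iota 0 n)).
Proof.
have -> : iota 0 n = [tuple val i | i < n] by rewrite /= -val_enum_ord enumT unlock.
by apply: (iffP tuple_permP) => -[pi ->]; exists pi; rewrite word_tupleE.
Qed.

Lemma word_inj n : injective (@word n).
Proof.
move=> pi1 pi2 e; apply/permP => i; apply: val_inj.
by have := congr1 (nth 0 ^~ i) e; rewrite /= !nth_word.
Qed.

Lemma card_word n (R : pred (seq nat)) :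
  #|[set pi : 'S_n | R (word pi)]| = count R (permutations (iota 0 n)).
Proof.
rewrite cardsE cardE /enum_mem size_filter -enumT.
rewrite -[count _ _]/(count (R \o @word n) _) -count_map.
apply/seq.permP/uniq_perm => [||s].
- by rewrite (map_inj_uniq (@word_inj n)) enum_uniq.
- exact: permutations_uniq.
rewrite mem_permutations; apply/mapP/perm_eq_iota_wordP => -[pi]; last first.
  by move->; exists pi; rewrite ?mem_enum.
by move=> _ ->; exists pi.
Qed.

Lemma subseq_iota_sorted n idx :
  sorted ltn idx -> all (gtn n) idx -> subseq idx (iota 0 n).
Proof.
move=> so /allP lt_n.
have <- : [seq i <- iota 0 n | i \in idx] = idx.
  apply: (irr_sorted_eq ltn_trans ltnn) => //.
    exact/sorted_filter/iota_ltn_sorted/ltn_trans.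
  move=> i; rewrite mem_filter mem_iota add0n.
  by case iI: (i \in idx) => //=; apply: lt_n.
exact: filter_subseq.
Qed.

Lemma contains_word n (pi : 'S_n) tau : contains pi tau = word_contains (word pi) tau.
Proof.
have wE : word pi = map (nth 0 (word pi)) (iota 0 n).
  by rewrite -{1}(mkseq_nth 0 (word pi)) size_word.
apply/existsP/word_containsP => [[f /forallP occ] | [t /subseqP [m sm ->] tp]].
  have f_mono (a b : 'I_(size tau)) : a < b -> f a < f b.
    by move=> ab; have /forallP /(_ b) /andP [/implyP -> //] := occ a.
  set idx := [seq val (f a) | a <- enum 'I_(size tau)].
  have size_idx : size idx = size tau by rewrite size_map size_enum_ord.
  have nth_idx i (il : i < size tau) : nth 0 idx i = f (Ordinal il).
    exact: (nth_map_enum_ord (fun a => val (f a))).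
  exists (map (nth 0 (word pi)) idx).
    rewrite [X in subseq _ X]wE; apply/map_subseq/subseq_iota_sorted.
      apply: (homo_sorted (e := relpre val ltn)) => [a b /f_mono //|].
      by rewrite -sorted_map val_enum_ord iota_ltn_sorted.
    by apply/allP => _ /mapP [a _ ->]; rewrite /= ltn_ord.
  apply/order_isoP; rewrite size_map size_idx; split=> // i j il jl.
  rewrite !(nth_map 0) ?size_idx // (nth_idx i il) (nth_idx j jl) !nth_word.
  by have /forallP /(_ (Ordinal jl)) /andP [_ /eqP] := occ (Ordinal il).
move: tp; rewrite wE -map_mask; set idx := mask m (iota 0 n) => tp.
have idx_sorted : sorted ltn idx.
  exact: (subseq_sorted ltn_trans (mask_subseq _ _) (iota_ltn_sorted 0 n)).
have [st Ht] := order_isoP _ _ tp; rewrite size_map in st.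
have idx_lt (a : 'I_(size tau)) : nth 0 idx a < n.
  by rewrite -[_ < n](mem_iota 0) (mem_mask (m := m)) // mem_nth ?st.
exists [ffun a => Ordinal (idx_lt a)]; apply/forallP => a; apply/forallP => b.
rewrite !ffunE /=; apply/andP; split.
  apply/implyP => ab; apply: (sorted_ltn_nth ltn_trans 0 idx_sorted) => //.
  by rewrite inE st.
  by rewrite inE st.
have nthE (c : 'I_(size tau)) :
    val (pi (Ordinal (idx_lt c))) = nth 0 (map (nth 0 (word pi)) idx) c.
  by rewrite (nth_map 0) ?st // (nth_word pi (Ordinal (idx_lt c))).
by rewrite !nthE Ht.
Qed.

Local Open Scope ring_scope.
Import GRing.Theory.

Theorem corollary3p14 (n : nat) : (2 <= n)%N ->
  (#|[set pi : 'S_n | [&& avoids pi [:: 1; 2; 4; 3]%N,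
                          avoids pi [:: 2; 1; 4; 3]%N &
                          avoids pi [:: 2; 3; 1]%N]]|%:R : rat)
  = (n + 2)%:R * (2%:R : rat) ^ (n%:Z - 3).
Proof.
move=> n2.
have avoidsE (pi : 'S_n) :
    [&& avoids pi [:: 1; 2; 4; 3]%N, avoids pi [:: 2; 1; 4; 3]%N &
        avoids pi [:: 2; 3; 1]%N] = avoids_all patterns_1243_2143_231 (word pi).
  by rewrite /avoids !contains_word /avoids_all /= andbT.
rewrite (@eq_finset _ _ _ avoidsE) card_word {avoidsE}.
case: n n2 => [|[|m]] // _.
have := count_avoids_1243_2143_231 0 m; move: (count _ _) => c cE.
have -> : m.+2%:Z - 3 = m%:Z - 1 by rewrite -addn2 PoszD; ring.
rewrite expfzDr ?pnatr_eq0 // -exprnP exprN1.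
have -> : c%:R = ((m + 4) * 2 ^ m)%N%:R / 2 :> rat by rewrite -cE natrM; field.
by rewrite !natrM natrX !natrD; field.
Qed.
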